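(* Let $k$ be a field of characteristic $0$ and let $d_1,\dots,d_n$ be positive integers with $t=\sum_{i=1}^n(d_i-1)$ odd. Let $X\subset\mathbb{P}^{n-1}(k)$ be the set of points represented by $(a_1,\dots,a_{n-1},1)$ with $a_i\in\{(d_i-1)-2j\mid 0\le j\le d_i-1\}$ for $1\le i\le n-1$ and such that $1+\sum_{i=1}^{n-1}a_i\in\{(d_n-1)-2j\mid 0\le j\le d_n-1\}$. Then $$|X|=\big[T^{\frac{t-1}{2}}\big]\frac{\prod_{i=1}^n(1-T^{d_i})}{(1-T)^n}.$$
   Context: For a power series $f$, $[T^a]f$ denotes the coefficient of $T^a$ in $f$. *)

From HB Require Import structures.
From mathcomp Require Import all_boot all_order all_algebra.
Set Implicit Arguments. Unset Strict Implicit. Unset Printing Implicit Defensive.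
Import Order.TTheory GRing.Theory Num.Theory.
Local Open Scope ring_scope.

Definition valset (d : nat) : seq int :=
  [seq ((d%:Z - 1) - 2 * j%:Z) | j <- iota 0 d].

Definition tdeg (n : nat) (d : nat -> nat) : nat :=
  (\sum_(1 <= i < n.+1) (d i).-1)%N.

(* v : 'rV[k]_n (a vector of k^n, representative of a point of P^{n-1}(k))
   is of the form (a_1, ..., a_{n-1}, 1) with a_i in valset (d i) and
   1 + sum a_i in valset (d n). *)
Definition inX (k : fieldType) (n : nat) (d : nat -> nat) (v : 'rV[k]_n) : Prop :=
  exists a : nat -> int,
    (forall i, (1 <= i <= n.-1)%N -> a i \in valset (d i)) /\
    (1 + \sum_(1 <= i < n) a i) \in valset (d n) /\
    (forall j : 'I_n, v ord0 j = if (j < n.-1)%N then (a j.+1)%:~R else 1).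

(* Two representatives with last coordinate 1 define the same projective
   point iff they are equal, so points of X correspond bijectively to
   such vectors. *)
Definition projpt_eq (k : fieldType) (n : nat) (v w : 'rV[k]_n) : Prop :=
  exists c : k, c != 0 /\ w = c *: v.

(* [T^a] (f/g) for power series, g(0) = 1: the a-th coefficient of any
   polynomial h with h*g = f modulo T^(a+1). *)
Definition ps_coef_quot (f g : {poly int}) (a : nat) (c : int) : Prop :=
  exists h : {poly int},
    (forall i, (i <= a)%N -> (h * g - f)`_i = 0) /\ h`_a = c.

From HB Require Import structures.
From mathcomp Require Import all_boot all_order all_algebra.
From mathcomp Require Import zify.
Import Order.TTheory GRing.Theory Num.Theory.
Local Open Scope ring_scope.

(* Substituting a_i = (d_i - 1) - 2 j_i, a tuple (a_1, ..., a_m) with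
   a_i in valset (d_i) is the same as a tuple of exponents 0 <= j_i < d_i,
   and its sum is t - 2 (j_1 + ... + j_m).  Hence the number of tuples of sum
   2 j - t is the coefficient of T^j in prod_i (1 + T + ... + T^(d_i - 1)),
   and this product is prod_i (1 - T^(d_i)) / (1 - T)^n.  A point of X is a
   tuple (a_1, ..., a_(n-1)) with 1 + sum a_i in valset (d_n); as valset (d_n)
   is symmetric, these are counted by the n-tuples of sum -1, i.e. by the
   coefficient of index (t - 1)/2. *)

Lemma count_sum (T : Type) (a : pred T) (r : seq T) :
  count a r = (\sum_(x <- r) a x)%N.
Proof. by elim: r => [|x r IH]; rewrite ?big_nil ?big_cons //= IH. Qed.

Lemma intr_inj_pchar0 (R : idomainType) :
  [pchar R] =i pred0 -> injective (intr : int -> R).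
Proof.
move=> /pcharf0P R0 z1 z2 E; apply/eqP; rewrite -subr_eq0.
have : (z1 - z2)%:~R == 0 :> R by rewrite intrB E subrr.
by case: (z1 - z2) => m; rewrite ?NegzE ?mulrNz ?oppr_eq0 -pmulrn R0.
Qed.

Lemma valset_uniq (d : nat) : uniq (valset d).
Proof. by rewrite map_inj_uniq ?iota_uniq // => i j; lia. Qed.

Lemma valset_ge (d : nat) (x : int) : x \in valset d -> - (d.-1)%:Z <= x.
Proof. by case/mapP=> j; rewrite mem_iota => ? ->; lia. Qed.

Lemma sum_valset (d : nat) (F : int -> nat) :
  (\sum_(x <- valset d) F x = \sum_(j < d) F (d%:Z - 1 - 2 * j%:Z)%R)%N.
Proof.
rewrite /valset big_map.
have -> : iota 0 d = index_iota 0 d by rewrite /index_iota subn0.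
by rewrite big_mkord.
Qed.

Lemma sum_valsetN (d : nat) (F : int -> nat) :
  (\sum_(x <- valset d) F x = \sum_(x <- valset d) F (- x))%N.
Proof.
rewrite !sum_valset [RHS](reindex_inj rev_ord_inj) /=.
by apply: eq_bigr => -[j ?] _ /=; congr F; lia.
Qed.

Lemma tdegS (m : nat) (d : nat -> nat) :
  tdeg m.+1 d = (tdeg m d + (d m.+1).-1)%N.
Proof. by rewrite /tdeg big_nat_recr. Qed.

Definition sumz (s : seq int) : int := \sum_(x <- s) x.

Lemma sumz_rcons (s : seq int) (x : int) : sumz (rcons s x) = sumz s + x.
Proof. by rewrite /sumz -cats1 big_cat big_seq1. Qed.

Lemma sumz_mkseq (a : nat -> int) (m : nat) :
  sumz (mkseq a m) = \sum_(i < m) a i.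
Proof. by rewrite /sumz big_map -(big_mkord xpredT) /index_iota subn0. Qed.

Section ValueTuples.

Variable d : nat -> nat.

Fixpoint valtuples (m : nat) : seq (seq int) :=
  if m is m'.+1 then [seq rcons s x | s <- valtuples m', x <- valset (d m)]
  else [:: [::]].

Lemma mem_valtuples (m : nat) (s : seq int) :
  (s \in valtuples m) =
  (size s == m) && all (fun i => nth 0 s i \in valset (d i.+1)) (iota 0 m).
Proof.
elim: m s => [|m IH] s; first by case: s.
case/lastP: s => [|s x].
  apply/negbTE/allpairsP => -[[s' x'] [_ _ /= /(congr1 size)]].
  by rewrite size_rcons.
have -> : (rcons s x \in valtuples m.+1) =
          (s \in valtuples m) && (x \in valset (d m.+1)).
  apply/allpairsP/andP => [[[s' x'] [/= ? ? /rcons_inj [-> ->]]] | [? ?]] //.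
  by exists (s, x).
rewrite IH size_rcons eqSS -addn1 iotaD all_cat /= add0n andbT.
case: eqP => //= size_s; rewrite nth_rcons size_s ltnn eqxx addn1; congr andb.
apply: eq_in_all => i; rewrite mem_iota => /andP[_ ?].
by rewrite nth_rcons size_s ifT.
Qed.

Lemma valtuples_uniq (m : nat) : uniq (valtuples m).
Proof.
elim: m => [|m IH] //=; apply: allpairs_uniq => //; first exact: valset_uniq.
by move=> [s1 x1] [s2 x2] _ _ /= /rcons_inj.
Qed.

Lemma sumz_valtuples_ge (m : nat) (s : seq int) :
  s \in valtuples m -> - (tdeg m d)%:Z <= sumz s.
Proof.
elim: m s => [|m IH] s /=.
  by rewrite mem_seq1 => /eqP ->; rewrite /tdeg big_geq // /sumz big_nil.
case/allpairsP => -[s' x] [/= /IH ? /valset_ge ? ->].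
by rewrite sumz_rcons tdegS; lia.
Qed.

Definition ntuples_sum (m : nat) (c : int) : nat :=
  count (fun s => sumz s == c) (valtuples m).

Lemma ntuples_sum0 (c : int) : ntuples_sum 0 c = (c == 0).
Proof. by rewrite /ntuples_sum /= addn0 /sumz big_nil eq_sym. Qed.

Lemma ntuples_sumS (m : nat) (c : int) :
  ntuples_sum m.+1 c = (\sum_(x <- valset (d m.+1)) ntuples_sum m (c - x))%N.
Proof.
rewrite /ntuples_sum /= count_flatten sumnE [in LHS]big_map [in LHS]big_map.
under [RHS]eq_bigr => x _ do rewrite count_sum.
rewrite exchange_big; apply: eq_bigr => s _.
rewrite count_map count_sum; apply: eq_bigr => x _ /=.
by rewrite sumz_rcons; congr nat_of_bool; apply/eqP/eqP; lia.
Qed.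

Lemma ntuples_sum_small (m : nat) (c : int) :
  c < - (tdeg m d)%:Z -> ntuples_sum m c = 0%N.
Proof.
move=> c_small; apply/eqP; rewrite -leqn0 leqNgt -has_count.
by apply/hasP => -[s /sumz_valtuples_ge ? /eqP ?]; lia.
Qed.

Lemma count_sumz_in_valset (m : nat) (c : int) :
  count (fun s => c + sumz s \in valset (d m.+1)) (valtuples m) =
  ntuples_sum m.+1 (- c).
Proof.
rewrite ntuples_sumS sum_valsetN /ntuples_sum.
under [RHS]eq_bigr => x _ do rewrite count_sum.
rewrite exchange_big count_sum; apply: eq_bigr => s _ /=.
rewrite -count_sum -(count_uniq_mem _ (valset_uniq (d m.+1))).
by apply: eq_count => x /=; apply/eqP/eqP; lia.
Qed.

Definition geom_prod (m : nat) : {poly int} :=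
  \prod_(1 <= i < m.+1) \sum_(j < d i) 'X^j.

Lemma geom_prod_mul_pow (m : nat) :
  geom_prod m * (1 - 'X) ^+ m = \prod_(1 <= i < m.+1) (1 - 'X^(d i)).
Proof.
have geom e : (1 - 'X^e : {poly int}) = (1 - 'X) * \sum_(j < e) 'X^j.
  rewrite -{1}(expr1n _ e) subrXX; congr (_ * _).
  by apply: eq_bigr => j _; rewrite expr1n mul1r.
rewrite (eq_bigr _ (fun i _ => geom (d i))) big_split /= prodr_const_nat.
by rewrite subn1 mulrC.
Qed.

Lemma coef_geom_prod (m j : nat) :
  (geom_prod m)`_j = (ntuples_sum m (2 * j%:Z - (tdeg m d)%:Z))%:Z.
Proof.
elim: m j => [|m IH] j.
  by rewrite /geom_prod /tdeg !big_geq //= coef1 ntuples_sum0; case: j.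
rewrite /geom_prod big_nat_recr //= -/(geom_prod m) mulr_sumr coef_sum.
rewrite ntuples_sumS sum_valsetN sum_valset (big_morph Posz PoszD (erefl 0%:Z)).
apply: eq_bigr => -[e ?] _ /=; rewrite coefMXn IH tdegS.
case: ltnP => ?; first by rewrite ntuples_sum_small //; lia.
by congr (Posz (ntuples_sum _ _)); lia.
Qed.

End ValueTuples.

Section AffinePoints.

Variables (k : fieldType) (N : nat).

Definition affine_point (s : seq int) : 'rV[k]_N.+1 :=
  \row_(j < N.+1) if (j < N)%N then (nth 0 s j)%:~R else 1.

Lemma affine_point_last (s : seq int) : affine_point s ord0 ord_max = 1.
Proof. by rewrite mxE /= ltnn. Qed.

Lemma projpt_eq_affine (s s' : seq int) :
  projpt_eq (affine_point s) (affine_point s') ->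
  affine_point s = affine_point s'.
Proof.
case=> c [_ E]; have := congr1 (fun v : 'rV_N.+1 => v ord0 ord_max) E.
rewrite /= affine_point_last mxE affine_point_last mulr1 => c1.
by rewrite E -c1 scale1r.
Qed.

Lemma affine_point_inj : [pchar k] =i pred0 ->
  {in [pred s | size s == N] &, injective affine_point}.
Proof.
move=> k0 s s' /eqP size_s /eqP size_s' E.
apply: (@eq_from_nth _ 0) => [|i]; first by rewrite size_s size_s'.
rewrite size_s => lt_iN; apply: (@intr_inj_pchar0 k k0).
have := congr1 (fun v : 'rV_N.+1 => v ord0 (inord i)) E.
by rewrite !mxE inordK ?lt_iN //; lia.
Qed.

End AffinePoints.

Section PointsOfX.

Variables (k : fieldType) (d : nat -> nat) (N : nat).

Definition Xpoints : seq 'rV[k]_N.+1 :=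
  [seq affine_point k N s
  | s <- valtuples d N & 1 + sumz s \in valset (d N.+1)].

Lemma mem_Xpoints (v : 'rV[k]_N.+1) : v \in Xpoints <-> inX d v.
Proof.
split.
  case/mapP=> s; rewrite mem_filter => /andP[sum_s s_in ->].
  move: s_in; rewrite mem_valtuples => /andP[/eqP size_s /allP all_s].
  exists (fun i => nth 0 s i.-1); split.
    by case=> [|i] // /andP[_ ?]; apply: all_s; rewrite mem_iota; lia.
  split; last by move=> j; rewrite mxE.
  rewrite big_add1 big_mkord -sumz_mkseq -{1}size_s mkseq_nth; exact: sum_s.
case=> a [a_in [sum_a v_a]]; apply/mapP; exists (mkseq (fun i => a i.+1) N).
  rewrite big_add1 big_mkord /= in sum_a.
  rewrite mem_filter mem_valtuples size_mkseq eqxx sumz_mkseq sum_a /=.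
  apply/allP => i.
  by rewrite mem_iota => ?; rewrite nth_mkseq; [apply: a_in|]; lia.
apply/rowP => j; rewrite v_a mxE; case: ifP => // ?.
by rewrite nth_mkseq.
Qed.

Lemma Xpoints_uniq : [pchar k] =i pred0 -> uniq Xpoints.
Proof.
move=> k0; rewrite map_inj_in_uniq ?filter_uniq ?valtuples_uniq //.
move=> s s'; rewrite !mem_filter !mem_valtuples.
by move=> /and3P[_ size_s _] /and3P[_ size_s' _]; apply: affine_point_inj.
Qed.

End PointsOfX.

Lemma odd_half_pred (t : nat) : odd t -> 2 * (t.-1./2)%:Z - t%:Z = -1.
Proof.
by move=> odd_t; rewrite -(odd_double_half t) odd_t add1n /= doubleK; lia.
Qed.

Theorem mainTheorem8 (k : fieldType) (n : nat) (d : nat -> nat) :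
  [pchar k] =i pred0 ->
  (forall i, (1 <= i <= n)%N -> (0 < d i)%N) ->
  odd (tdeg n d) ->
  exists X : seq 'rV[k]_n,
    (* X lists each point of the set exactly once (as its representative
       with last coordinate 1) *)
    (forall v, v \in X <-> inX d v) /\
    (forall v w, v \in X -> w \in X -> projpt_eq v w -> v = w) /\
    uniq X /\
    ps_coef_quot (\prod_(1 <= i < n.+1) (1 - 'X^(d i)))
                 ((1 - 'X) ^+ n) ((tdeg n d).-1./2) (size X)%:Z.
Proof.
move=> k0 _; case: n => [|N]; first by rewrite /tdeg big_geq.
move=> odd_t; exists (Xpoints k d N); split; first exact: mem_Xpoints.
split.
  by move=> v w /mapP[s _ ->] /mapP[s' _ ->]; apply: projpt_eq_affine.
split; first exact: Xpoints_uniq.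
exists (geom_prod d N.+1); split.
  by move=> i _; rewrite geom_prod_mul_pow subrr coef0.
rewrite coef_geom_prod odd_half_pred // size_map size_filter.
by rewrite count_sumz_in_valset.
Qed.
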